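(* Let $I$ be a finitely generated pure ideal of a commutative ring $R$. Then $R$ is semihereditary if and only if $R\bowtie I$ is semihereditary.
   Context: All rings are commutative with identity. For an ideal $I$ of $R$, $R\bowtie I=\{(r,r+i): r\in R,\ i\in I\}$ is a subring of $R\times R$ (componentwise operations, unit $(1,1)$). An ideal $I$ is pure if $R/I$ is a flat $R$-module. A ring is semihereditary if every finitely generated ideal is projective. *)

From HB Require Import structures.
From mathcomp Require Import all_boot all_algebra.
From mathcomp Require Import boolp.
From mathcomp Require Import ring.

Set Implicit Arguments.
Unset Strict Implicit.
Unset Printing Implicit Defensive.

Import GRing.Theory.
Local Open Scope ring_scope.

Definition is_ideal (A : comPzRingType) (J : A -> Prop) : Prop :=
  [/\ J 0, (forall x y, J x -> J y -> J (x - y)) &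
      (forall a x, J x -> J (a * x))].

Definition fg_ideal (A : comPzRingType) (J : A -> Prop) : Prop :=
  exists (n : nat) (g : 'I_n -> A),
    forall x, J x <-> exists c : 'I_n -> A, x = \sum_(i < n) c i * g i.

Definition linear_on (A : pzRingType) (V W : lmodType A) (S : V -> Prop)
    (f : V -> W) : Prop :=
  forall (a : A) (u v : V), S u -> S v -> f (a *: u + v) = a *: f u + f v.

Definition submodule (A : pzRingType) (V : lmodType A) (S : V -> Prop) : Prop :=
  [/\ S 0, (forall u v, S u -> S v -> S (u + v)) &
      (forall (a : A) u, S u -> S (a *: u))].

(* A linear map J -> X is represented by a function A -> X that is linear   *)
(* on J (its values outside J are irrelevant).                              *)

Definition projective_ideal (A : comPzRingType) (J : A -> Prop) : Prop :=
  forall (M N : lmodType A) (f : M -> N),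
    linear_on (fun _ => True) f -> (forall y : N, exists x : M, f x = y) ->
  forall g : A -> N, linear_on (V := A^o) J g ->
  exists h : A -> M, linear_on (V := A^o) J h /\ (forall x, J x -> f (h x) = g x).

Definition semihereditary (A : comPzRingType) : Prop :=
  forall J : A -> Prop, fg_ideal J -> projective_ideal J.

(* For a submodule S of N and x_i in S, m_i in M, the element                *)
(*   sum_i x_i (x) m_i  of  S (x)_A M                                        *)
(* vanishes iff every A-bilinear map S x M -> P kills sum_i b(x_i, m_i).     *)

Definition bilinear_on (A : comPzRingType) (N M P : lmodType A) (S : N -> Prop)
    (b : N -> M -> P) : Prop :=
  (forall m : M, linear_on S (fun x => b x m)) /\
  (forall x : N, S x -> linear_on (fun _ => True) (b x)).

Definition tensor_vanishes (A : comPzRingType) (N M : lmodType A)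
    (S : N -> Prop) (k : nat) (x : 'I_k -> N) (m : 'I_k -> M) : Prop :=
  forall (P : lmodType A) (b : N -> M -> P),
    bilinear_on S b -> \sum_(i < k) b (x i) (m i) = 0.

(* M is flat iff - (x)_A M preserves injections, i.e. for every submodule
   S of a module N the natural map S (x) M -> N (x) M is injective. *)
Definition flat (A : comPzRingType) (M : lmodType A) : Prop :=
  forall (N : lmodType A) (S : N -> Prop), submodule S ->
  forall (k : nat) (x : 'I_k -> N) (m : 'I_k -> M),
    (forall i, S (x i)) ->
    tensor_vanishes (fun _ => True) x m -> tensor_vanishes S x m.

(* I is pure iff R/I is a flat R-module.  R/I is given (up to isomorphism)
   as any R-module M with a surjective R-linear map R -> M of kernel I. *)
Definition pure_ideal (R : comPzRingType) (I : R -> Prop) : Prop :=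
  forall (M : lmodType R) (pi : R -> M),
    linear_on (V := R^o) (fun _ => True) pi ->
    (forall y : M, exists r : R, pi r = y) ->
    (forall r : R, pi r = 0 <-> I r) ->
    flat M.

Section Dup.
Variables (R : comPzRingType) (I : R -> Prop) (hI : is_ideal I).

Definition dup_pred : {pred R * R} := [pred x : R * R | `[< I (x.2 - x.1) >]].

Lemma dup_subring_closed : subring_closed dup_pred.
Proof.
case: hI => I0 IB IM.
rewrite /subring_closed; split.
- by rewrite inE; apply/asboolP; rewrite subrr.
- move=> [a b] [c d]; rewrite !inE /= => /asboolP h1 /asboolP h2; apply/asboolP.
  have -> : b - d - (a - c) = (b - a) - (d - c) by ring.
  exact: IB.
- move=> [a b] [c d]; rewrite !inE /= => /asboolP h1 /asboolP h2; apply/asboolP.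
  have -> : b * d - a * c = b * (d - c) + c * (b - a)
    by ring.
  have -> : b * (d - c) + c * (b - a) = b * (d - c) - (- c) * (b - a)
    by ring.
  by apply: IB; apply: IM.
Qed.

Definition dup := {x : R * R | x \in dup_pred}.

End Dup.

Definition dup_t (R : comPzRingType) (I : R -> Prop) (hI : is_ideal I) :=
  dup I.

HB.instance Definition _ (R : comPzRingType) (I : R -> Prop) (hI : is_ideal I) :=
  [isSub of dup_t hI for @sval _ _].
HB.instance Definition _ (R : comPzRingType) (I : R -> Prop) (hI : is_ideal I) :=
  [Choice of dup_t hI by <:].
HB.instance Definition _ (R : comPzRingType) (I : R -> Prop) (hI : is_ideal I) :=
  GRing.SubChoice_isSubComPzRing.Build (R * R)%type (dup_pred I) (dup_t hI)
    (dup_subring_closed hI).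

Notation "R ⋈ hI" := (@dup_t R _ hI) (at level 40).

(* Purity and finite generation give I a unit element e: flatness of R/I puts
   every a in I into aI, and the local units of finitely many generators combine
   into one.  Then (1, 1 - e) and (0, e) are complementary idempotents of R ⋈ I
   whose corners are images of R under the two projections, so a dual basis of a
   finitely generated ideal of R ⋈ I is glued from dual bases of its two
   projections to R.  Conversely R is a retract of R ⋈ I (diagonal, first
   projection), and dual bases descend along retracts. *)

From HB Require Import structures.
From mathcomp Require Import all_boot all_algebra.
From mathcomp Require Import boolp ring.

Set Implicit Arguments.
Unset Strict Implicit.
Unset Printing Implicit Defensive.

Import GRing.Theory.
Local Open Scope ring_scope.

Section IdealTheory.
Variables (A : comPzRingType) (J : A -> Prop) (hJ : is_ideal J).

Lemma ideal0 : J 0. Proof. by case: hJ. Qed.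

Lemma idealB x y : J x -> J y -> J (x - y). Proof. by case: hJ => _ + _; apply. Qed.

Lemma idealMl a x : J x -> J (a * x). Proof. by case: hJ => _ _; apply. Qed.

Lemma idealN x : J x -> J (- x).
Proof. by move=> Jx; rewrite -sub0r; apply: idealB => //; apply: ideal0. Qed.

Lemma idealD x y : J x -> J y -> J (x + y).
Proof. by move=> Jx Jy; rewrite -[y]opprK; apply/idealB/idealN. Qed.

Lemma ideal_submodule : submodule (J : A^o -> Prop).
Proof. by split; [apply: ideal0 | apply: idealD | move=> a u; apply: idealMl]. Qed.

End IdealTheory.

Lemma fg_ideal_ideal (A : comPzRingType) (J : A -> Prop) : fg_ideal J -> is_ideal J.
Proof.
case=> n [g hg]; split.
- by apply/hg; exists (fun=> 0); rewrite big1 // => i _; rewrite mul0r.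
- move=> _ _ /hg[c ->] /hg[d ->]; apply/hg; exists (fun i => c i - d i).
  by rewrite -sumrB; apply: eq_bigr => i _; rewrite mulrBl.
- move=> a _ /hg[c ->]; apply/hg; exists (fun i => a * c i).
  by rewrite mulr_sumr; apply: eq_bigr => i _; rewrite mulrA.
Qed.

Lemma fg_ideal_generators (A : comPzRingType) (J : A -> Prop) n (g : 'I_n -> A) :
  (forall x, J x <-> exists c : 'I_n -> A, x = \sum_(i < n) c i * g i) ->
  forall i, J (g i).
Proof.
move=> hg i; apply/hg; exists (fun j => (j == i)%:R).
by rewrite (bigD1 i) //= eqxx mul1r big1 ?addr0 // => j /negbTE->; rewrite mul0r.
Qed.

Section LinearOn.
Variables (A : pzRingType) (V W : lmodType A) (S : V -> Prop) (hS : submodule S).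

Lemma submodule_sum n (c : 'I_n -> A) (v : 'I_n -> V) :
  (forall i, S (v i)) -> S (\sum_(i < n) c i *: v i).
Proof.
case: hS => S0 SD SZ Sv; elim/big_rec: _ => [|i y _ Sy] //.
by apply: SD => //; apply: SZ.
Qed.

Lemma linear_on0 (f : V -> W) : linear_on S f -> f 0 = 0.
Proof.
case: hS => S0 _ _ lf; have := lf 1 0 0 S0 S0.
by rewrite scaler0 addr0 scale1r -{1}[f 0]addr0 => /addrI.
Qed.

Lemma linear_on_sum (f : V -> W) : linear_on S f ->
  forall n (c : 'I_n -> A) (v : 'I_n -> V), (forall i, S (v i)) ->
  f (\sum_(i < n) c i *: v i) = \sum_(i < n) c i *: f (v i).
Proof.
move=> lf; elim=> [|n IH] c v Sv; first by rewrite !big_ord0 (linear_on0 lf).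
rewrite !big_ord_recr /= addrC lf //; last exact: submodule_sum.
by rewrite IH // addrC.
Qed.

End LinearOn.

(* For [u = 1] this is the dual basis criterion for projectivity of [J]; a
   general [u] allows the two corners of an idempotent splitting to be treated
   separately. *)
Definition scaled_dual_basis (A : comPzRingType) (J : A -> Prop) (u : A) : Prop :=
  exists n (g : 'I_n -> A) (phi : 'I_n -> A -> A),
    [/\ forall i, J (g i),
        forall i a x y, J x -> J y -> phi i (a * x + y) = a * phi i x + phi i y &
        forall x, J x -> u * x = \sum_(i < n) phi i x * g i].

Notation dual_basis J := (scaled_dual_basis J 1).

Lemma dual_basis_projective (A : comPzRingType) (J : A -> Prop) :
  is_ideal J -> dual_basis J -> projective_ideal J.
Proof.
move=> hJ [n [g [phi [Jg lphi rep]]]] M N f lf fsurj h lh.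
have [m fm] := choice (fun i => fsurj (h (g i))).
exists (fun x => \sum_(i < n) phi i x *: m i); split.
  move=> a x y Jx Jy; rewrite scaler_sumr -big_split; apply: eq_bigr => i _ /=.
  by rewrite lphi // scalerDl scalerA.
move=> x Jx; have hM : submodule (fun _ : M => True) by [].
rewrite (linear_on_sum hM lf) //.
rewrite -[in RHS](mul1r x) rep // (linear_on_sum (ideal_submodule hJ) lh (phi^~ x) Jg).
by apply: eq_bigr => i _; rewrite fm.
Qed.

Section IdealModule.
Variables (A : comPzRingType) (J : A -> Prop).

Definition ideal_pred : {pred A^o} := [pred x | `[< J x >]].

Lemma ideal_predP x : reflect (J x) (x \in ideal_pred).
Proof. by rewrite inE; apply: asboolP. Qed.

Lemma ideal_pred_submod_closed : is_ideal J -> GRing.submod_closed ideal_pred.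
Proof.
move=> hJ; split=> [|a x y /ideal_predP Jx /ideal_predP Jy]; apply/ideal_predP.
  exact: ideal0.
by apply: idealD => //; apply: idealMl.
Qed.

(* The proof [hJ] is a phantom argument, so that type inference can find the
   module structure declared below. *)
Definition ideal_module of is_ideal J := {x : A^o | x \in ideal_pred}.

End IdealModule.

HB.instance Definition _ (A : comPzRingType) (J : A -> Prop) (hJ : is_ideal J) :=
  [isSub of ideal_module hJ for @sval _ _].
HB.instance Definition _ (A : comPzRingType) (J : A -> Prop) (hJ : is_ideal J) :=
  [Choice of ideal_module hJ by <:].
HB.instance Definition _ (A : comPzRingType) (J : A -> Prop) (hJ : is_ideal J) :=
  GRing.SubChoice_isSubLmodule.Build A A^o (ideal_pred J) (ideal_module hJ)
    (ideal_pred_submod_closed hJ).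

Lemma projective_dual_basis (A : comPzRingType) (J : A -> Prop) :
  fg_ideal J -> projective_ideal J -> dual_basis J.
Proof.
move=> hJ P; have hJi := fg_ideal_ideal hJ; case: hJ => n [g hg].
have Jcomb c : J (\sum_(i < n) c i * g i) by apply/hg; exists c.
pose into x : ideal_module hJi := insubd 0 x.
have intoK x : J x -> val (into x) = x.
  by move=> Jx; rewrite val_insubd; case: ideal_predP.
pose f (c : 'rV[A]_n) := into (\sum_(i < n) c 0 i * g i).
have lf : linear_on (fun=> True) f.
  move=> a c d _ _; apply: val_inj; rewrite raddfD /= !intoK //.
  rewrite scaler_sumr -big_split; apply: eq_bigr => i _ /=.
  by rewrite !mxE mulrDl -mulrA.
have fsurj y : exists c, f c = y.
  have /ideal_predP /hg [c yc] := valP y.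
  exists (\row_i c i); apply: val_inj; rewrite intoK // yc.
  by apply: eq_bigr => i _; rewrite mxE.
have linto : linear_on (V := A^o) J into.
  move=> a x y Jx Jy; apply: val_inj; rewrite raddfD /= !intoK //.
  by apply: idealD => //; apply: idealMl.
have [h [lh fh]] := P _ _ f lf fsurj into linto.
exists n, g, (fun i x => h x 0 i); split.
- exact: fg_ideal_generators hg.
- by move=> i a x y Jx Jy; rewrite lh // !mxE.
- by move=> x Jx; rewrite mul1r -{1}(intoK x Jx) -fh // intoK.
Qed.

Lemma semihereditaryP (A : comPzRingType) :
  semihereditary A <-> forall J : A -> Prop, fg_ideal J -> dual_basis J.
Proof.
split=> H J hJ; first exact: projective_dual_basis (H J hJ).
exact: dual_basis_projective (fg_ideal_ideal hJ) (H J hJ).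
Qed.

Lemma scaled_dual_basisD (A : comPzRingType) (J : A -> Prop) u v :
  scaled_dual_basis J u -> scaled_dual_basis J v -> scaled_dual_basis J (u + v).
Proof.
move=> [m [g [phi [Jg lphi rep]]]] [n [h [psi [Jh lpsi rep']]]].
pose gh i := match split i with inl j => g j | inr k => h k end.
pose phipsi i := match split i with inl j => phi j | inr k => psi k end.
have lK j : split (lshift n j) = inl j := unsplitK (inl j).
have rK k : split (rshift m k) = inr k := unsplitK (inr k).
exists (m + n)%N, gh, phipsi; split.
- by move=> i; rewrite /gh; case: split.
- by move=> i; rewrite /phipsi; case: split.
- move=> x Jx; rewrite big_split_ord mulrDl rep // rep' //.
  by congr (_ + _); apply: eq_bigr => j _; rewrite /gh /phipsi ?lK ?rK.
Qed.

Lemma fg_ideal_rmorph_image (A B : comPzRingType) (p : {rmorphism B -> A})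
    (J : B -> Prop) :
  (forall a, exists b, p b = a) -> fg_ideal J ->
  fg_ideal (fun a => exists2 X, J X & p X = a).
Proof.
move=> psurj [n [G hG]]; exists n, (p \o G) => a; split.
  move=> [_ /hG[c ->] <-]; exists (p \o c); rewrite rmorph_sum.
  by under eq_bigr do rewrite rmorphM.
move=> [c ->]; have [b pb] := choice (fun i => psurj (c i)).
exists (\sum_(i < n) b i * G i); first by apply/hG; exists b.
by rewrite rmorph_sum; apply: eq_bigr => i _; rewrite rmorphM pb.
Qed.

Lemma semihereditary_retract (A B : comPzRingType) (s : {rmorphism A -> B})
    (p : {rmorphism B -> A}) :
  cancel s p -> semihereditary B -> semihereditary A.
Proof.
move=> sK /semihereditaryP hB; apply/semihereditaryP => J [m [a ha]].
pose Js X := exists c : 'I_m -> B, X = \sum_(k < m) c k * s (a k).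
have [n [G [Phi [JsG lPhi rPhi]]]] : dual_basis Js by apply: hB; exists m, (s \o a).
have pJs X : Js X -> J (p X).
  move=> [c ->]; apply/ha; exists (p \o c); rewrite rmorph_sum.
  by apply: eq_bigr => k _; rewrite rmorphM sK.
have sJ x : J x -> Js (s x).
  move=> /ha[c ->]; exists (s \o c); rewrite rmorph_sum.
  by apply: eq_bigr => k _; rewrite rmorphM.
exists n, (p \o G), (fun i x => p (Phi i (s x))); split.
- by move=> i; apply: pJs.
- move=> i b x y /sJ Jx /sJ Jy /=.
  by rewrite rmorphD rmorphM lPhi // rmorphD rmorphM sK.
- move=> x Jx; have := congr1 p (rPhi _ (sJ x Jx)).
  by rewrite !rmorphM rmorph1 sK rmorph_sum /= => ->; under eq_bigr do rewrite rmorphM.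
Qed.

Section IdempotentSplitting.
Variables (A B : comPzRingType) (d : {rmorphism A -> B}).

Lemma scaled_dual_basis_idempotent (p : {rmorphism B -> A}) (u : B) (J : B -> Prop) :
  u * u = u -> (forall X, u * X = u * d (p X)) -> fg_ideal J ->
  dual_basis (fun a => exists2 X, J X & p X = a) -> scaled_dual_basis J u.
Proof.
move=> uu ud hJ [n [g [phi [Jg lphi rep]]]].
have pJ Y : J Y -> exists2 X, J X & p X = p Y by exists Y.
exists n, (fun i => u * d (g i)), (fun i X => u * d (phi i (p X))); split.
- move=> i; have [X JX <-] := Jg i; rewrite -ud.
  exact: idealMl (fg_ideal_ideal hJ) _ _ JX.
- move=> i a Y Z /pJ JY /pJ JZ; rewrite rmorphD rmorphM lphi //.
  by rewrite rmorphD rmorphM mulrDr mulrA -ud [u * a]mulrC -mulrA.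
- move=> Y /pJ JY; rewrite ud -[in LHS](mul1r (p Y)) rep // rmorph_sum mulr_sumr.
  by apply: eq_bigr => i _; rewrite rmorphM mulrACA uu.
Qed.

Lemma semihereditary_idempotent_split (p p' : {rmorphism B -> A}) (u : B) :
  cancel d p -> cancel d p' -> u * u = u ->
  (forall X, u * X = u * d (p X)) -> (forall X, (1 - u) * X = (1 - u) * d (p' X)) ->
  semihereditary A -> semihereditary B.
Proof.
move=> dK dK' uu ud ud' /semihereditaryP hA; apply/semihereditaryP => J hJ.
have vv : (1 - u) * (1 - u) = 1 - u.
  by rewrite mulrBr mulr1 mulrBl mul1r uu subrr subr0.
rewrite -(subrK u 1) addrC; apply: scaled_dual_basisD.
  apply: (scaled_dual_basis_idempotent uu ud hJ); apply: hA.
  by apply: fg_ideal_rmorph_image => // a; exists (d a).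
apply: (scaled_dual_basis_idempotent vv ud' hJ); apply: hA.
by apply: fg_ideal_rmorph_image => // a; exists (d a).
Qed.

End IdempotentSplitting.

Section Duplication.
Variables (R : comPzRingType) (I : R -> Prop) (hI : is_ideal I).

Lemma dup_predP x : reflect (I (x.2 - x.1)) (x \in dup_pred I).
Proof. by rewrite inE; apply: asboolP. Qed.

Lemma dup_diag_subproof r : (r, r) \in dup_pred I.
Proof. by apply/dup_predP; rewrite subrr; apply: ideal0. Qed.

Definition dup_diag (r : R) : R ⋈ hI := Sub (r, r) (dup_diag_subproof r).

Lemma dup_diag_is_zmod_morphism : zmod_morphism dup_diag.
Proof. by move=> r s; apply: val_inj. Qed.

Lemma dup_diag_is_monoid_morphism : monoid_morphism dup_diag.
Proof. by split=> [|r s]; apply: val_inj. Qed.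

HB.instance Definition _ := GRing.isZmodMorphism.Build R (R ⋈ hI) dup_diag
  dup_diag_is_zmod_morphism.
HB.instance Definition _ := GRing.isMonoidMorphism.Build R (R ⋈ hI) dup_diag
  dup_diag_is_monoid_morphism.

Definition dup_fst : {rmorphism R ⋈ hI -> R} := fst \o val.
Definition dup_snd : {rmorphism R ⋈ hI -> R} := snd \o val.

Lemma dup_diag_fstK : cancel dup_diag dup_fst. Proof. by []. Qed.
Lemma dup_diag_sndK : cancel dup_diag dup_snd. Proof. by []. Qed.

Lemma semihereditary_of_dup : semihereditary (R ⋈ hI) -> semihereditary R.
Proof. exact: semihereditary_retract dup_diag_fstK. Qed.

Section UnitElement.
Variables (e : R) (Ie : I e) (eK : forall x, I x -> e * x = x).

Lemma dup_idem_subproof : (1, 1 - e) \in dup_pred I.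
Proof. by apply/dup_predP; rewrite /= addrAC subrr add0r; exact: idealN hI _ Ie. Qed.

Definition dup_idem : R ⋈ hI := Sub (1, 1 - e) dup_idem_subproof.

Lemma dup_idemM : dup_idem * dup_idem = dup_idem.
Proof.
apply: val_inj => /=; congr (_, _); first exact: mulr1.
by rewrite mulrBr mulr1 mulrBl mul1r eK // subrr subr0.
Qed.

Lemma dup_idem_fst X : dup_idem * X = dup_idem * dup_diag (dup_fst X).
Proof.
apply: val_inj; case: X => [[x y] /dup_predP /= Ixy] /=; congr (_, _).
by apply/eqP; rewrite -subr_eq0 -mulrBr mulrBl mul1r eK // subrr.
Qed.

Lemma dup_idem_snd X :
  (1 - dup_idem) * X = (1 - dup_idem) * dup_diag (dup_snd X).
Proof.
apply: val_inj; case: X => [[x y] Pxy].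
by apply: injective_projections => //=; rewrite subrr !mul0r.
Qed.

Lemma dup_semihereditary : semihereditary R -> semihereditary (R ⋈ hI).
Proof.
exact: semihereditary_idempotent_split dup_diag_fstK dup_diag_sndK dup_idemM
  dup_idem_fst dup_idem_snd.
Qed.

End UnitElement.
End Duplication.

Section CosetRepresentative.
Variables (R : comPzRingType) (J : R -> Prop) (hJ : is_ideal J).

Lemma coset_rep_subproof (r : R) : exists x, `[< J (x - r) >].
Proof. by exists r; apply/asboolP; rewrite subrr; apply: ideal0. Qed.

Definition coset_rep (r : R) : R := xchoose (coset_rep_subproof r).

Lemma coset_repP r : J (coset_rep r - r).
Proof. exact/asboolP/(xchooseP (coset_rep_subproof r)). Qed.

Lemma coset_rep_eq r s : J (r - s) -> coset_rep r = coset_rep s.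
Proof.
move=> Jrs; apply: eq_xchoose => x; apply/asboolP/asboolP => Jx.
  have -> : x - s = (x - r) + (r - s) by ring.
  exact: idealD.
have -> : x - r = (x - s) - (r - s) by ring.
exact: idealB.
Qed.

Lemma coset_repK r : coset_rep (coset_rep r) = coset_rep r.
Proof. exact/coset_rep_eq/coset_repP. Qed.

End CosetRepresentative.

(* [R/J] is realised by the canonical coset representatives; as for
   [ideal_module], the proof [hJ] is a phantom argument. *)
Definition quot_module (R : comPzRingType) (J : R -> Prop) (hJ : is_ideal J) :=
  {x : R | coset_rep hJ x == x}.

HB.instance Definition _ (R : comPzRingType) (J : R -> Prop) (hJ : is_ideal J) :=
  [isSub of quot_module hJ for @sval _ _].
HB.instance Definition _ (R : comPzRingType) (J : R -> Prop) (hJ : is_ideal J) :=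
  [Choice of quot_module hJ by <:].

Section QuotientModule.
Variables (R : comPzRingType) (J : R -> Prop) (hJ : is_ideal J).
Local Notation Q := (quot_module hJ).

Definition qproj (r : R) : Q := exist _ (coset_rep hJ r) (introT eqP (coset_repK hJ r)).

Lemma qproj_val (u : Q) : qproj (val u) = u.
Proof. by apply: val_inj; apply/eqP; apply: (valP u). Qed.

Lemma qproj_eq r s : J (r - s) -> qproj r = qproj s.
Proof. by move=> Jrs; apply/val_inj/coset_rep_eq. Qed.

Lemma qproj_inj r s : qproj r = qproj s -> J (r - s).
Proof.
move=> /(congr1 val) /= rs.
have -> : r - s = (coset_rep hJ s - s) - (coset_rep hJ r - r) by rewrite rs; ring.
by apply: (idealB hJ); apply: coset_repP.
Qed.

Lemma qproj_valP r : J (val (qproj r) - r). Proof. exact: coset_repP. Qed.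

Lemma qproj_ind (P : Q -> Prop) : (forall r, P (qproj r)) -> forall u, P u.
Proof. by move=> Pq u; rewrite -(qproj_val u). Qed.

Definition qadd (u v : Q) := qproj (val u + val v).
Definition qopp (u : Q) := qproj (- val u).
Definition qscale (a : R) (u : Q) := qproj (a * val u).

Lemma qaddE r s : qadd (qproj r) (qproj s) = qproj (r + s).
Proof.
apply: qproj_eq; have -> : val (qproj r) + val (qproj s) - (r + s) =
  (val (qproj r) - r) + (val (qproj s) - s) by ring.
by apply: (idealD hJ); apply: qproj_valP.
Qed.

Lemma qoppE r : qopp (qproj r) = qproj (- r).
Proof.
apply: qproj_eq; have -> : - val (qproj r) - - r = - (val (qproj r) - r) by ring.
exact/(idealN hJ)/qproj_valP.
Qed.

Lemma qscaleE a r : qscale a (qproj r) = qproj (a * r).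
Proof.
apply: qproj_eq; rewrite -mulrBr.
exact/(idealMl hJ)/qproj_valP.
Qed.

Lemma qaddA : associative qadd.
Proof.
by elim/qproj_ind=> r; elim/qproj_ind=> s; elim/qproj_ind=> t; rewrite !qaddE addrA.
Qed.

Lemma qaddC : commutative qadd.
Proof. by elim/qproj_ind=> r; elim/qproj_ind=> s; rewrite !qaddE addrC. Qed.

Lemma qadd0 : left_id (qproj 0) qadd.
Proof. by elim/qproj_ind=> r; rewrite qaddE add0r. Qed.

Lemma qaddN : left_inverse (qproj 0) qopp qadd.
Proof. by elim/qproj_ind=> r; rewrite qoppE qaddE addNr. Qed.

HB.instance Definition _ := GRing.isZmodule.Build Q qaddA qaddC qadd0 qaddN.

Lemma qscaleA a b u : qscale a (qscale b u) = qscale (a * b) u.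
Proof. by elim/qproj_ind: u => r; rewrite !qscaleE mulrA. Qed.

Lemma qscale1 : left_id 1 qscale.
Proof. by elim/qproj_ind=> r; rewrite qscaleE mul1r. Qed.

Lemma qscaleDr : right_distributive qscale qadd.
Proof.
move=> a; elim/qproj_ind=> r; elim/qproj_ind=> s.
by rewrite qaddE !qscaleE qaddE mulrDr.
Qed.

Lemma qscaleDl u : {morph qscale^~ u : a b / a + b >-> qadd a b}.
Proof. by elim/qproj_ind: u => r a b; rewrite !qscaleE qaddE mulrDl. Qed.

HB.instance Definition _ :=
  GRing.Zmodule_isLmodule.Build R Q qscaleA qscale1 qscaleDr qscaleDl.

Lemma qprojD r s : qproj r + qproj s = qproj (r + s). Proof. exact: qaddE. Qed.

Lemma qprojZ a r : a *: qproj r = qproj (a * r). Proof. exact: qscaleE. Qed.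

Lemma qproj_linear : linear_on (V := R^o) (fun=> True) qproj.
Proof. by move=> a r s _ _; rewrite qprojZ qprojD. Qed.

Lemma qproj_surj (u : Q) : exists r, qproj r = u.
Proof. by exists (val u); apply: qproj_val. Qed.

Lemma qproj_eq0 r : qproj r = 0 <-> J r.
Proof.
split=> [/qproj_inj | Jr]; first by rewrite subr0.
by apply: qproj_eq; rewrite subr0.
Qed.

Lemma quot_val_linear a (u v : Q) : J (val (a *: u + v) - (a * val u + val v)).
Proof.
elim/qproj_ind: u => r; elim/qproj_ind: v => s.
change (J (val (qadd (qscale a (qproj r)) (qproj s))
          - (a * val (qproj r) + val (qproj s)))).
rewrite qscaleE qaddE.
have -> : val (qproj (a * r + s)) - (a * val (qproj r) + val (qproj s)) =
  (val (qproj (a * r + s)) - (a * r + s)) - a * (val (qproj r) - r)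
  - (val (qproj s) - s) by ring.
by apply: (idealB hJ); [apply: (idealB hJ); [|apply: (idealMl hJ)] |]; apply: qproj_valP.
Qed.

End QuotientModule.

Lemma tensor_vanishes_annihilated (R : comPzRingType) (M : lmodType R) (a : R) (m : M) :
  a *: m = 0 -> tensor_vanishes (fun=> True) (fun _ : 'I_1 => a : R^o) (fun=> m).
Proof.
move=> am0 P b [bl br]; rewrite big_ord1.
have -> : (a : R^o) = a *: (1 : R^o) + 0 by rewrite addr0 /GRing.scale /= mulr1.
rewrite bl // (linear_on0 _ (bl m)) // addr0.
have := br 1 I a m 0 I I.
by rewrite addr0 am0 (linear_on0 _ (br 1 I)) // addr0 => <-.
Qed.

Lemma ideal_scale (R : comPzRingType) (I : R -> Prop) (a : R) :
  is_ideal I -> is_ideal (fun z => exists2 i, I i & z = a * i).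
Proof.
move=> hI; split.
- by exists 0; [apply: ideal0 | rewrite mulr0].
- move=> _ _ [i Ii ->] [j Ij ->]; exists (i - j); first exact: idealB.
  by rewrite mulrBr.
- move=> c _ [i Ii ->]; exists (c * i); first exact: idealMl.
  by rewrite mulrCA.
Qed.

Lemma pure_ideal_factor (R : comPzRingType) (I : R -> Prop) (hI : is_ideal I) :
  pure_ideal I -> forall a, I a -> exists2 b, I b & a = a * b.
Proof.
(* [a (x) 1] vanishes in [R (x) R/I], hence by flatness in [Ra (x) R/I]; the
   bilinear map [(x, m) |-> x m] from [Ra * R/I] to [R/aI] then puts [a] in [aI]. *)
move=> pI a Ia; have haI := ideal_scale a hI.
have flatQ := pI _ _ (qproj_linear hI) (@qproj_surj _ _ hI) (qproj_eq0 hI).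
pose S (x : R^o) := exists r, x = r * a.
have hS : submodule S.
  split; first by exists 0; rewrite mul0r.
    by move=> _ _ [r ->] [s ->]; exists (r + s); rewrite mulrDl.
  by move=> c _ [r ->]; exists (c * r); rewrite -mulrA.
pose b (x : R^o) (m : quot_module hI) := qproj haI (x * val m).
have bil : bilinear_on S b.
  split=> [m c x y _ _ | _ [r ->] c m m' _ _]; rewrite /b qprojZ qprojD.
    by congr qproj; change ((c * x + y : R) * val m = c * (x * val m) + y * val m); ring.
  apply: qproj_eq; set d := val (c *: m + m') - (c * val m + val m').
  by exists (r * d); [exact: idealMl hI r _ (quot_val_linear c m m') | rewrite /d; ring].
have Sa (i : 'I_1) : S a by exists 1; rewrite mul1r.
have a1 : a *: qproj hI 1 = 0 by rewrite qprojZ mulr1; apply/qproj_eq0.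
have := flatQ _ S hS _ _ _ Sa (tensor_vanishes_annihilated a1) _ b bil.
rewrite big_ord1 => /qproj_eq0 [i Ii ai].
exists (i - (val (qproj hI 1) - 1)); first by apply: (idealB hI) => //; apply: qproj_valP.
by rewrite mulrBr -ai; ring.
Qed.

Section LocalUnits.
Variables (R : comPzRingType) (I : R -> Prop) (hI : is_ideal I).
Hypothesis Ifactor : forall a, I a -> exists2 b, I b & a = a * b.

Lemma ideal_local_unit (s : seq R) :
  all (fun x => `[< I x >]) s -> exists2 e, I e & forall x, x \in s -> x * e = x.
Proof.
elim: s => [_|y s IHs /= /andP[/asboolP Iy /IHs[e Ie es]]].
  by exists 0 => //; apply: ideal0.
have [b Ib yb] := Ifactor Iy.
exists (e + b - e * b); first by apply: (idealB hI); [apply: idealD | apply: idealMl].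
move=> x; rewrite inE => /predU1P[-> | /es xe].
  have -> : y * (e + b - e * b) = y * b + y * e - y * b * e by ring.
  by rewrite -yb addrK.
have -> : x * (e + b - e * b) = x * e + x * b - x * e * b by ring.
by rewrite xe addrK.
Qed.

Lemma fg_ideal_unit : fg_ideal I -> exists2 e, I e & forall x, I x -> e * x = x.
Proof.
move=> [n [g hg]]; have Ig := fg_ideal_generators hg.
have [|e Ie ge] := @ideal_local_unit [seq g i | i <- enum 'I_n].
  by apply/allP => _ /mapP[i _ ->]; apply/asboolP.
exists e => // _ /hg[c ->]; rewrite mulr_sumr; apply: eq_bigr => i _.
by rewrite mulrCA [e * _]mulrC ge // map_f // mem_enum.
Qed.

End LocalUnits.

Theorem corollary2p5 (R : comPzRingType) (I : R -> Prop) (hI : is_ideal I) :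
  fg_ideal I -> pure_ideal I ->
  (semihereditary R <-> semihereditary (R ⋈ hI)).
Proof.
move=> fgI pI; have [e Ie eK] := fg_ideal_unit hI (pure_ideal_factor hI pI) fgI.
split; first exact: dup_semihereditary Ie eK.
exact: semihereditary_of_dup.
Qed.
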